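(* For every $13$-card Rummy hand $h$ and every choice of wild-card joker $wcj$, we have $\mathrm{MinDist}(h,wcj)\le 8$.
   Context: Rummy is played with a single standard deck (ranks $A,2,3,\dots,10,J,Q,K$ in each of the four suits) together with a printed joker. A hand is a set of $13$ distinct cards from this deck. A wild-card joker $wcj$ is a designated card; every card of the same rank as $wcj$ (and the printed joker) is a joker, which may stand in for any other card. A meld is one of: a pure sequence (at least $3$ cards of the same suit with consecutive ranks in the order $A\,2\,3\,4\,5\,6\,7\,8\,9\,10\,J\,Q\,K\,A$, i.e. the ace may be low or high but sequences do not wrap around through $K\,A\,2$); an impure sequence (as a pure sequence, but one or more cards replaced by jokers); a pure set (at least $3$ cards of the same rank and pairwise different suits); an impure set (as a pure set, but one or more cards replaced by jokers). A hand is declarable if it can be partitioned into melds of which at least one is a pure sequence and at least one other is a (pure or impure) sequence. For hands $h,h'$, $d_{wcj}(h,h')$ is the minimum number of cards of $h$ that must be replaced to obtain $h'$ (i.e. $13-|h\cap h'|$), and $\mathrm{MinDist}(h,wcj)=\min\{d_{wcj}(h,h') : h' \text{ a declarable hand}\}$. *)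

From mathcomp Require Import all_boot.
Set Implicit Arguments. Unset Strict Implicit. Unset Printing Implicit Defensive.

(* A card (type rcard): [Some (s, r)] is the standard card of suit [s : 'I_4] and rank
   [r : 'I_13] (rank index 0 = A, 1..9 = 2..10, 10 = J, 11 = Q, 12 = K);
   [None] is the printed joker.  The deck is the 53 inhabitants of [rcard]. *)
Definition rcard := option ('I_4 * 'I_13).

(* The wild-rcard joker is a standard card [w]; a rcard is a joker iff it is the
   printed joker or has the same rank as [w]. *)
Definition jokerb (w : 'I_4 * 'I_13) (c : rcard) : bool :=
  if c is Some p then p.2 == w.2 else true.

(* Positions in the order A 2 ... K A : rank index r sits at position r+1,
   and the ace (r = 0) additionally at position 14.  [pos_in a k r]: some
   position of rank r lies in the window [a, a+k). *)
Definition pos_in (a k : nat) (r : 'I_13) : bool :=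
  ((a <= r.+1) && (r.+1 < a + k)) || [&& (r == 0 :> nat), a <= 14 & 14 < a + k].

Definition in_window (s : 'I_4) (a k : nat) (c : rcard) : bool :=
  if c is Some p then (p.1 == s) && pos_in a k p.2 else false.

(* Pure sequence: >= 3 cards, all of suit s, forming exactly the cards of
   suit s in a window of |T| consecutive positions (no wrap-around). *)
Definition pure_seqb (T : {set rcard}) : bool :=
  (3 <= #|T|) &&
  [exists s : 'I_4, exists a : 'I_16, T == [set c | in_window s a #|T| c]].

(* Pure set: >= 3 cards of the same rank (pairwise distinct suits is then
   automatic, as cards are distinct). *)
Definition pure_setb (T : {set rcard}) : bool :=
  (3 <= #|T|) &&
  [exists r : 'I_13, T \subset [set c : rcard | if c is Some p then p.2 == r else false]].

(* M is obtained from a pure meld T (of kind P) by replacing one or more of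
   its cards by jokers: M = N ∪ J, N ⊆ T the cards kept, J a nonempty set of
   jokers (disjoint from N) filling the |T| - |N| remaining places. *)
Definition impure_of (P : pred {set rcard}) (w : 'I_4 * 'I_13) (M : {set rcard}) : bool :=
  [exists N : {set rcard}, exists J : {set rcard}, exists T : {set rcard},
    [&& M == N :|: J, [disjoint N & J], J != set0,
        J \subset [set c | jokerb w c], P T, N \subset T &
        #|N| + #|J| == #|T| ]].

Definition impure_seqb w M := impure_of pure_seqb w M.
Definition impure_setb w M := impure_of pure_setb w M.

Definition seqb w M := pure_seqb M || impure_seqb w M.

Definition meldb w M :=
  [|| pure_seqb M, impure_seqb w M, pure_setb M | impure_setb w M].

Definition declarableb (w : 'I_4 * 'I_13) (h : {set rcard}) : bool :=
  (#|h| == 13) &&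
  [exists P : {set {set rcard}},
    [&& partition P h, [forall M in P, meldb w M] &
        [exists M1 in P, exists M2 in P,
           [&& M1 != M2, pure_seqb M1 & seqb w M2]]]].

Definition dist (h h' : {set rcard}) : nat := 13 - #|h :&: h'|.

(* MinDist(h, wcj) = min of d(h,h') over declarable h' (13 is a harmless
   default: d <= 13 always and declarable hands exist). *)
Definition MinDist (h : {set rcard}) (w : 'I_4 * 'I_13) : nat :=
  \big[minn/13]_(h' : {set rcard} | declarableb w h') dist h h'.

(* Write n_s for the number of cards of suit s in h; then n_s summed over the
   four suits, plus one if h holds the printed joker, is 13.  It suffices to
   build a declarable hand sharing five cards with h.
   - If some n_s >= 5, take all of suit s, split into the pure sequences A..6
     and 7..K.
   - Otherwise, if some n_s = 4, the other suits contribute at least 8 cards,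
     so some n_t >= 3 and some further n_u >= 1; pure sequences of lengths 4,
     6 and 3 in suits s, t, u can be placed to catch 2, 2 and 1 cards of h.
   - Otherwise every n_s <= 3, so h holds the printed joker and every n_s = 3;
     a pure 6-sequence in one suit and a 6-sequence completed by the joker in
     another catch 2, 2 and 1 cards of h.
   The placements rest on a pigeonhole argument: m ranks of one suit always
   include two inside some window of k consecutive positions of A 2 .. K A
   once 12 <= k (m - 1). *)

From mathcomp Require Import all_boot all_order zify.
Import Order.TTheory.

Set Implicit Arguments.
Unset Strict Implicit.
Unset Printing Implicit Defensive.

Lemma cardsU_disjoint (T : finType) (A B : {set T}) :
  [disjoint A & B] -> #|A :|: B| = #|A| + #|B|.
Proof. by move=> AB; apply/eqP; rewrite (leq_card_setU A B).2. Qed.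

Lemma cardsIUr_disjoint (T : finType) (h A B : {set T}) :
  [disjoint A & B] -> #|h :&: (A :|: B)| = #|h :&: A| + #|h :&: B|.
Proof.
by move=> AB; rewrite setIUr cardsU_disjoint // (disjointW (subsetIr h A) (subsetIr h B)).
Qed.

Lemma disjoint_setU (T : finType) (A B C : {set T}) :
  [disjoint A :|: B & C] = [disjoint A & C] && [disjoint B & C].
Proof. by rewrite -!setI_eq0 setIUl setU_eq0. Qed.

Lemma disjoint_neq (T : finType) (A B : {set T}) : A != set0 -> [disjoint A & B] -> A != B.
Proof. by move=> A0 AB; apply: contraTneq AB => <-; rewrite -setI_eq0 setIid. Qed.

Lemma partition_set1 (T : finType) (B : {set T}) : B != set0 -> partition [set B] B.
Proof.
move=> B0; rewrite -[B in partition _ B]setU0 -[[set B]]setU0.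
by apply: partitionU1; rewrite ?partition_set0 // -setI_eq0 setI0.
Qed.

Lemma partition_set2 (T : finType) (A B : {set T}) :
  A != set0 -> B != set0 -> [disjoint A & B] -> partition [set A; B] (A :|: B).
Proof. by move=> A0 B0 AB; apply: partitionU1 => //; apply: partition_set1. Qed.

Lemma sum_gt_witness (I : finType) (A : {set I}) (F : I -> nat) b :
  #|A| * b < \sum_(i in A) F i -> exists2 i, i \in A & b < F i.
Proof.
move=> lt_sum.
have [/exists_inP[i Ai lt_b] | /exists_inPn small] := boolP [exists i in A, b < F i].
  by exists i.
move: lt_sum; rewrite ltnNge -sum_nat_const => /negP[]; apply: leq_sum => i Ai.
by rewrite leqNgt small.
Qed.

Lemma card_ord_count n (P : pred nat) : #|[set i : 'I_n | P i]| = count P (iota 0 n).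
Proof.
rewrite -val_enum_ord count_map cardE /enum_mem size_filter count_filter.
by apply: eq_count => i; rewrite !inE andbT.
Qed.

Lemma count_iota_all (P : pred nat) m n :
  {in iota m n, forall i, P i} -> count P (iota m n) = n.
Proof.
by move=> Pall; rewrite -[RHS](size_iota m n); apply/eqP; rewrite -all_count; apply/allP.
Qed.

Lemma count_iota_none (P : pred nat) m n :
  {in iota m n, forall i, ~~ P i} -> count P (iota m n) = 0.
Proof. by move=> noneP; apply/eqP; rewrite eqn0Ngt -has_count; apply/hasPn. Qed.

(* If no two points of S are closer than k, the blocks [lo + j k, lo + (j + 1) k)
   separate them, yet fewer than #|S| blocks meet [lo, lo + L). *)
Lemma pigeonhole_close n (S : {set 'I_n}) lo L k :
  0 < k -> 0 < L -> {in S, forall x : 'I_n, lo <= x < lo + L} -> L <= k * #|S|.-1 ->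
  exists x y : 'I_n, [/\ x \in S, y \in S & x < y < x + k].
Proof.
move=> k0 L0 inS dense.
have [/existsP[x /existsP[y /and3P[xS yS xy]]] | /existsPn far] :=
  boolP [exists x, exists y, [&& x \in S, y \in S & x < y < x + k]]; first by exists x, y.
pose block (x : 'I_n) := (x - lo) %/ k.
have block_inj : {in S &, injective block}.
  suff lt_block x y : x \in S -> y \in S -> x < y -> block x < block y.
    move=> x y xS yS exy; case: (ltngtP x y) => [xy | yx | /val_inj //].
      by move: (lt_block x y xS yS xy); rewrite exy ltnn.
    by move: (lt_block y x yS xS yx); rewrite exy ltnn.
  move=> xS yS xy; have /existsPn/(_ y) := far x; rewrite xS yS xy /= -leqNgt => kyx.
  have := inS x xS; have := inS y yS.
  rewrite /block leq_divRL // => /andP[ly _] /andP[lx _].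
  move: (leq_divM (x - lo) k); set q := (x - lo) %/ k; rewrite mulSn; lia.
have : #|S| <= (L.-1 %/ k).+1.
  rewrite cardE -(size_map block) -(size_iota 0 (L.-1 %/ k).+1).
  apply: uniq_leq_size.
    by rewrite map_inj_in_uniq ?enum_uniq // => x y; rewrite !mem_enum; apply: block_inj.
  move=> b /mapP[x]; rewrite mem_enum => /inS x_lo ->.
  by rewrite mem_iota /block ltnS leq_div2r //; lia.
move: (leq_divM L.-1 k); rewrite mulnC; nia.
Qed.

Lemma card_pos_in a k : 0 < a -> a + k <= 15 -> 0 < k <= 13 ->
  #|[set r : 'I_13 | pos_in a k r]| = k.
Proof.
move=> a0 ak k13; rewrite (card_ord_count 13 (fun i =>
  ((a <= i.+1) && (i.+1 < a + k)) || [&& i == 0, a <= 14 & 14 < a + k])).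
have [ak14 | ak15] := leqP (a + k) 14.
  have -> : iota 0 13 = iota 0 (a.-1 + (k + (14 - a - k))) by congr iota; lia.
  rewrite !iotaD !count_cat count_iota_none 1?count_iota_all 1?count_iota_none; first lia;
    by move=> i; rewrite mem_iota; lia.
have -> : iota 0 13 = iota 0 (1 + (a.-2 + k.-1)) by congr iota; lia.
rewrite !iotaD !count_cat count_iota_all 1?count_iota_none 1?count_iota_all; first lia;
  by move=> i; rewrite mem_iota; lia.
Qed.

Lemma window_pair (x y : 'I_13) k : 0 < k <= 14 -> x <= y < x + k ->
  exists a, [/\ 0 < a, a + k <= 15, pos_in a k x & pos_in a k y].
Proof.
move=> k14 xy; have := ltn_ord y.
by exists (minn x.+1 (15 - k)); split; rewrite /pos_in; lia.
Qed.

Lemma window_one_rank (R : {set 'I_13}) k : 0 < k <= 14 -> 0 < #|R| ->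
  exists a, [/\ 0 < a, a + k <= 15 & 0 < #|[set r in R | pos_in a k r]|].
Proof.
move=> k14 /card_gt0P[x xR]; have xx : x <= x < x + k by lia.
have [a [a0 ak ax _]] := window_pair k14 xx.
by exists a; split => //; apply/card_gt0P; exists x; rewrite !inE xR.
Qed.

(* Ranks avoiding the ace (or the king) occupy 12 consecutive positions, so the
   pigeonhole applies; an ace and a king together sit in the window ending at A. *)
Lemma window_two_ranks (R : {set 'I_13}) k : 1 < k <= 14 -> 12 <= k * #|R|.-1 ->
  exists a, [/\ 0 < a, a + k <= 15 & 1 < #|[set r in R | pos_in a k r]|].
Proof.
move=> k14 dense; have k0 : 0 < k by lia.
suff [x [y [xR yR xy [a [a0 ak ax ay]]]]] : exists x y, [/\ x \in R, y \in R, x != y &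
    exists a, [/\ 0 < a, a + k <= 15, pos_in a k x & pos_in a k y]].
  by exists a; split => //; apply/card_gt1P; exists x, y; rewrite !inE xR yR ax ay.
have close_pair lo : {in R, forall x : 'I_13, lo <= x < lo + 12} -> exists x y, [/\ x \in R,
    y \in R, x != y & exists a, [/\ 0 < a, a + k <= 15, pos_in a k x & pos_in a k y]].
  move=> inR.
  have [x [y [xR yR /andP[xy yxk]]]] := pigeonhole_close k0 (isT : 0 < 12) inR dense.
  exists x, y; split; rewrite ?neq_ltn ?xy //.
  by apply: window_pair; lia.
have [AR | AnR] := boolP (ord0 \in R); last first.
  apply: (close_pair 1) => x xR; have : x != ord0 by apply: contraNneq AnR => <-.
  by rewrite -(inj_eq val_inj) /=; have := ltn_ord x; lia.
have [KR | KnR] := boolP (ord_max \in R); last first.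
  apply: (close_pair 0) => x xR; have : x != ord_max by apply: contraNneq KnR => <-.
  by rewrite -(inj_eq val_inj) /=; have := ltn_ord x; lia.
exists ord0, ord_max; split => //; exists (15 - k); split; rewrite /pos_in /=; lia.
Qed.

Definition suit_ranks (h : {set rcard}) (s : 'I_4) : {set 'I_13} :=
  [set r | Some (s, r) \in h].

Definition run (s : 'I_4) (a k : nat) : {set rcard} := [set c | in_window s a k c].

Lemma card_hand (h : {set rcard}) :
  #|h| = (None \in h) + \sum_(s < 4) #|suit_ranks h s|.
Proof.
rewrite (cardsD1 None); congr (_ + _).
have -> : h :\ None = Some @: [set p | Some p \in h].
  apply/setP => -[p|]; rewrite !inE /=; last by apply/esym/imsetP => -[].
  by rewrite (mem_imset _ _ Some_inj) inE.
rewrite card_imset; last exact: Some_inj.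
rewrite -sum1_card (eq_bigl (fun p => Some p \in h)) => [|p]; last by rewrite inE.
under [RHS]eq_bigr => s _ do rewrite -sum1_card.
by rewrite pair_big_dep; apply: eq_bigl => -[s r]; rewrite inE.
Qed.

Lemma card_setI_run h s a k :
  #|h :&: run s a k| = #|[set r in suit_ranks h s | pos_in a k r]|.
Proof.
have -> : h :&: run s a k = (fun r => Some (s, r)) @: [set r in suit_ranks h s | pos_in a k r].
  apply/setP => c; rewrite !inE; apply/andP/imsetP => [[hc] | [r + ->]].
    case: c hc => [[t r]|] //= hc /andP[/eqP ts ar]; subst t.
    by exists r; rewrite // !inE hc.
  by rewrite !inE /= eqxx => /andP[-> ->].
by rewrite card_imset // => r1 r2 [->].
Qed.

Lemma card_run s a k : 0 < a -> a + k <= 15 -> 0 < k <= 13 -> #|run s a k| = k.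
Proof.
move=> a0 ak k13; rewrite -(setTI (run s a k)) card_setI_run -[RHS](card_pos_in a0 ak k13).
by apply: eq_card => r; rewrite !inE.
Qed.

Lemma pure_seqb_run s a k : 0 < a -> a + k <= 15 -> 2 < k <= 13 -> pure_seqb (run s a k).
Proof.
move=> a0 ak k13; have a16 : a < 16 by lia.
rewrite /pure_seqb card_run //; last by lia.
rewrite (_ : 2 < k) /=; last by lia.
by apply/existsP; exists s; apply/existsP; exists (Ordinal a16).
Qed.

Lemma disjoint_run s t a b k l : s != t -> [disjoint run s a k & run t b l].
Proof.
move=> st; apply/pred0P => -[[u r]|]; rewrite !inE //=.
by apply/negbTE; apply: contra st => /and3P[/andP[/eqP <- _] /eqP <- _].
Qed.

Lemma run_sub s a b k l : a <= b -> b + k <= a + l -> run s b k \subset run s a l.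
Proof.
move=> ab bk; apply/subsetP => -[[t r]|]; rewrite !inE //= /pos_in => /andP[-> ?]; lia.
Qed.

(* The printed joker fills the one missing card of a run of length k + 1. *)
Lemma impure_seqb_run_joker w s b k : 0 < b -> b + k <= 15 -> 1 < k <= 12 ->
  impure_seqb w (run s b k :|: [set None]).
Proof.
move=> b0 bk k12; pose a := minn b (14 - k).
apply/existsP; exists (run s b k); apply/existsP; exists [set None].
apply/existsP; exists (run s a k.+1).
rewrite eqxx disjoint_sym disjoints1 inE /= -card_gt0 cards1 sub1set !inE /=.
by rewrite pure_seqb_run ?run_sub ?card_run ?addn1 // /a; lia.
Qed.

Lemma seqb_card w M : seqb w M -> 2 < #|M|.
Proof.
case/orP => [/andP[] // | /existsP[N /existsP[J /existsP[T]]]].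
case/and5P => /eqP -> NJ _ _ /and3P[/andP[T3 _] _ /eqP NJT].
by rewrite cardsU_disjoint // NJT.
Qed.

Lemma seqb_neq0 w M : seqb w M -> M != set0.
Proof. by move/seqb_card; rewrite -card_gt0; apply: leq_trans. Qed.

Lemma meldb_seqb w M : seqb w M -> meldb w M.
Proof. by rewrite /meldb; case/orP => ->; rewrite ?orbT. Qed.

Lemma declarableb_intro w P h' A B :
  partition P h' -> {in P, forall M, meldb w M} -> A \in P -> B \in P -> A != B ->
  pure_seqb A -> seqb w B -> #|h'| = 13 -> declarableb w h'.
Proof.
move=> Ph' meldP AP BP AB pA sB h'13; rewrite /declarableb h'13 eqxx /=.
apply/existsP; exists P; rewrite Ph' /=; apply/andP; split; first exact/forall_inP.
by apply/exists_inP; exists A => //; apply/exists_inP; exists B => //; rewrite AB pA.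
Qed.

Lemma declarableb_setU w (A B : {set rcard}) :
  [disjoint A & B] -> pure_seqb A -> seqb w B -> #|A| + #|B| = 13 ->
  declarableb w (A :|: B).
Proof.
move=> AB pA sB AB13; have sA : seqb w A by rewrite /seqb pA.
have [A0 B0] := (seqb_neq0 sA, seqb_neq0 sB).
apply: (declarableb_intro (P := [set A; B]) (A := A) (B := B)) => //.
- exact: partition_set2.
- by move=> M; rewrite !inE => /orP[] /eqP ->; apply: meldb_seqb.
- by rewrite !inE eqxx.
- by rewrite !inE eqxx orbT.
- exact: disjoint_neq A0 AB.
- by rewrite cardsU_disjoint.
Qed.

Lemma declarableb_setU3 w (A B C : {set rcard}) :
  [disjoint A & B] -> [disjoint A & C] -> [disjoint B & C] ->
  pure_seqb A -> pure_seqb B -> pure_seqb C -> #|A| + #|B| + #|C| = 13 ->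
  declarableb w (A :|: B :|: C).
Proof.
move=> AB AC BC pA pB pC ABC13.
have [sA sB sC] : [/\ seqb w A, seqb w B & seqb w C] by rewrite /seqb pA pB pC.
have [[A0 B0] C0] := (seqb_neq0 sA, seqb_neq0 sB, seqb_neq0 sC).
have A_BC : [disjoint A & B :|: C].
  by rewrite disjoint_sym disjoint_setU !(disjoint_sym _ A) AB.
rewrite -setUA; apply: (declarableb_intro (P := A |: [set B; C]) (A := A) (B := B)) => //.
- exact: partitionU1 (partition_set2 B0 C0 BC) A0 A_BC.
- by move=> M; rewrite !inE => /or3P[] /eqP ->; apply: meldb_seqb.
- by rewrite !inE eqxx.
- by rewrite !inE eqxx orbT.
- exact: disjoint_neq A0 AB.
- by rewrite !cardsU_disjoint // addnA.
Qed.

Lemma MinDist_le w h h' : declarableb w h' -> MinDist h w <= dist h h'.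
Proof. by move=> dh'; rewrite /MinDist -minEnat; exact: (bigmin_le_cond 13 (dist h) dh'). Qed.

Lemma MinDist_le8 w h h' : declarableb w h' -> 4 < #|h :&: h'| -> MinDist h w <= 8.
Proof. by move=> dh' overlap; apply: leq_trans (MinDist_le h dh') _; rewrite /dist; lia. Qed.

Lemma MinDist_long_suit w h s : 4 < #|suit_ranks h s| -> MinDist h w <= 8.
Proof.
move=> long; pose low := [set r : 'I_13 | pos_in 1 6 r].
have high r : pos_in 7 7 r = (r \notin low) by rewrite inE /pos_in; have := ltn_ord r; lia.
have disj : [disjoint run s 1 6 & run s 7 7].
  apply/pred0P => -[[t r]|]; rewrite !inE //= high inE.
  by case: (pos_in 1 6 r); rewrite !andbF.
apply: (MinDist_le8 (h' := run s 1 6 :|: run s 7 7)).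
  by apply: declarableb_setU; rewrite /seqb ?pure_seqb_run ?card_run.
rewrite cardsIUr_disjoint // !card_setI_run; rewrite -(cardsID low) in long.
by congr (_ < _ + _): long; apply: eq_card => r; rewrite !inE ?high ?inE // andbC.
Qed.

Lemma MinDist_4_3_1 w h s t u : s != t -> s != u -> t != u ->
  3 < #|suit_ranks h s| -> 2 < #|suit_ranks h t| -> 0 < #|suit_ranks h u| ->
  MinDist h w <= 8.
Proof.
move=> st su tu ns nt nu.
have [a [a0 ak ha]] := @window_two_ranks (suit_ranks h s) 4 isT ltac:(lia).
have [b [b0 bk hb]] := @window_two_ranks (suit_ranks h t) 6 isT ltac:(lia).
have [c [c0 ck hc]] := @window_one_rank (suit_ranks h u) 3 isT nu.
have dst := disjoint_run a b 4 6 st.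
have dsu := disjoint_run a c 4 3 su.
have dtu := disjoint_run b c 6 3 tu.
apply: (MinDist_le8 (h' := run s a 4 :|: run t b 6 :|: run u c 3)).
  by apply: declarableb_setU3; rewrite ?pure_seqb_run ?card_run.
by rewrite !cardsIUr_disjoint ?disjoint_setU ?dsu // !card_setI_run; lia.
Qed.

Lemma MinDist_joker_3_3 w (h : {set rcard}) s t : s != t -> None \in h ->
  2 < #|suit_ranks h s| -> 2 < #|suit_ranks h t| -> MinDist h w <= 8.
Proof.
move=> st jh ns nt.
have [a [a0 ak ha]] := @window_two_ranks (suit_ranks h s) 6 isT ltac:(lia).
have [b [b0 bk hb]] := @window_two_ranks (suit_ranks h t) 6 isT ltac:(lia).
have jB : [disjoint run t b 6 & [set None]] by rewrite disjoint_sym disjoints1 inE.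
have disj : [disjoint run s a 6 & run t b 6 :|: [set None]].
  by rewrite disjoint_sym disjoint_setU disjoint_sym disjoint_run // disjoints1 inE.
apply: (MinDist_le8 (h' := run s a 6 :|: (run t b 6 :|: [set None]))).
  apply: declarableb_setU; rewrite ?pure_seqb_run ?cardsU_disjoint ?card_run ?cards1 //.
  by rewrite /seqb impure_seqb_run_joker ?orbT.
rewrite !cardsIUr_disjoint // !card_setI_run.
by rewrite (setIidPr _) ?sub1set // cards1; lia.
Qed.

Lemma suit_count_cases (n : 'I_4 -> nat) (j : bool) : j + \sum_(s < 4) n s = 13 ->
  [\/ exists s, 4 < n s,
      exists s t u, [/\ s != t, s != u, t != u & [/\ 3 < n s, 2 < n t & 0 < n u]]
    | exists s t, [/\ j, s != t, 2 < n s & 2 < n t]].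
Proof.
move=> total; have {}total : j + \sum_(s in setT) n s = 13.
  by rewrite -total (eq_bigl xpredT) // => s; rewrite inE.
have others (s : 'I_4) : #|setT :\ s| = 3.
  by move: (cardsD1 s setT); rewrite cardsT card_ord inE; lia.
have [s ns | long0] := pickP (fun s => 4 < n s); first by apply: Or31; exists s.
have le4 s : n s <= 4 by rewrite leqNgt long0.
have [s ns | long1] := pickP (fun s => 3 < n s).
  rewrite (big_setD1 s) ?inE //= in total.
  have [t /setD1P[ts _] nt] : exists2 t, t \in setT :\ s & 2 < n t.
    by apply: sum_gt_witness; rewrite others /=; move: (le4 s) (leq_b1 j); lia.
  rewrite (big_setD1 t) ?inE ?ts //= in total.
  have [u /setD1P[ut /setD1P[us _]] nu] : exists2 u, u \in setT :\ s :\ t & 0 < n u.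
    by apply: sum_gt_witness; rewrite muln0 /=; move: (le4 s) (le4 t) (leq_b1 j); lia.
  by apply: Or32; exists s, t, u; split; rewrite 1?eq_sym.
have le3 s : n s <= 3 by rewrite leqNgt long1.
have sum_le : \sum_(s in setT) n s <= #|[set: 'I_4]| * 3 by rewrite -sum_nat_const leq_sum.
rewrite cardsT card_ord in sum_le.
have jT : j by move: total; case: j => //=; rewrite add0n => S13; move: sum_le; rewrite S13.
have [s _ ns] : exists2 s, s \in setT & 2 < n s.
  by apply: sum_gt_witness; rewrite cardsT card_ord; move: total; rewrite jT; lia.
rewrite (big_setD1 s) ?inE //= in total.
have [t /setD1P[ts _] nt] : exists2 t, t \in setT :\ s & 2 < n t.
  by apply: sum_gt_witness; rewrite others /=; move: (le3 s) (leq_b1 j); lia.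
by apply: Or33; exists s, t; rewrite eq_sym.
Qed.

Theorem proposition2 (h : {set rcard}) (wcj : 'I_4 * 'I_13) :
  #|h| = 13 -> MinDist h wcj <= 8.
Proof.
rewrite card_hand => /suit_count_cases
  [[s long] | [s [t [u [st su tu [ns nt nu]]]]] | [s [t [jh st ns nt]]]].
- exact: MinDist_long_suit long.
- exact: MinDist_4_3_1 st su tu ns nt nu.
- exact: MinDist_joker_3_3 st jh ns nt.
Qed.
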